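(* Let $(S,\curlyvee)$ be a $\curlyvee$-algebra and $a,b,c,d,i\in S$. If $d\lesssim a\sqcup i$, $d\lesssim b\sqcup i$, $d\lesssim c\sqcup i$, $d\lesssim(a\curlyvee b)\sqcup i$ and $d\lesssim(b\curlyvee c)\sqcup i$, then $d\lesssim(a\curlyvee c)\sqcup i$.
   Context: A $\curlyvee$-algebra is an algebra $(S,\curlyvee)$ with one binary operation such that, defining $a\sqcup b=a\curlyvee(a\curlyvee b)$ and $a\lesssim b$ iff $b\sqcup a=b$: $\sqcup$ is associative, $a\sqcup a=a$ and $a\sqcup b=(a\sqcup b)\sqcup a$ (so $(S,\sqcup)$ is a left regular band); $\curlyvee$ is commutative and idempotent; $(a\curlyvee b)\sqcup(a\sqcup b)=a\sqcup b$; $a\sqcup(b\curlyvee c)=(a\sqcup b)\curlyvee(a\sqcup c)$; and for all $a,b,c,d$, if $d\lesssim a$, $d\lesssim b$, $d\lesssim c$, $d\lesssim a\curlyvee b$, $d\lesssim b\curlyvee c$ then $d\lesssim a\curlyvee c$. *)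

Section VeeAlg.
Context {S : Type} (vee : S -> S -> S).

Definition vsqcup (a b : S) : S := vee a (vee a b).

Definition vlesssim (a b : S) : Prop := vsqcup b a = b.

Definition is_vee_algebra : Prop :=
  (forall a b c, vsqcup a (vsqcup b c) = vsqcup (vsqcup a b) c) /\
  (forall a, vsqcup a a = a) /\
  (forall a b, vsqcup a b = vsqcup (vsqcup a b) a) /\
  (forall a b, vee a b = vee b a) /\
  (forall a, vee a a = a) /\
  (forall a b, vsqcup (vee a b) (vsqcup a b) = vsqcup a b) /\
  (forall a b c, vsqcup a (vee b c) = vee (vsqcup a b) (vsqcup a c)) /\
  (forall a b c d,
      vlesssim d a -> vlesssim d b -> vlesssim d c ->
      vlesssim d (vee a b) -> vlesssim d (vee b c) ->
      vlesssim d (vee a c)).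
End VeeAlg.


(* The left-regular-band laws of [⊔] alone give [i ⊔ d ≲ y] iff [i ≲ y] and
   [d ≲ y], and hence [d ≲ x ⊔ i] iff [i ⊔ d ≲ i ⊔ x].  Translating every hypothesis by [i ⊔ _]
   and distributing [i ⊔ _] over [⋎] reduces the statement to the last
   ⋎-algebra axiom, applied to [i ⊔ a], [i ⊔ b], [i ⊔ c] and [i ⊔ d]. *)

Section LeftRegularBand.
Context {S : Type} (vee : S -> S -> S).

Local Notation "x ⊔ y" := (vsqcup vee x y) (at level 40, left associativity).
Local Notation "x ≲ y" := (vlesssim vee x y) (at level 70).

Hypothesis vsqcupA : forall x y z, x ⊔ (y ⊔ z) = x ⊔ y ⊔ z.
Hypothesis vsqcup_left_regular : forall x y, x ⊔ y = x ⊔ y ⊔ x.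

Lemma vsqcup_absorb (x y : S) : x ⊔ (y ⊔ x) = x ⊔ y.
Proof. rewrite vsqcupA, <- vsqcup_left_regular. reflexivity. Qed.

Lemma vlesssim_sqcupl (x y d : S) : d ≲ y -> d ≲ x ⊔ y.
Proof. unfold vlesssim. intros Hdy. rewrite <- vsqcupA, Hdy. reflexivity. Qed.

Lemma vlesssim_sqcup_self (x y : S) : x ≲ x ⊔ y.
Proof. unfold vlesssim. symmetry. apply vsqcup_left_regular. Qed.

Lemma vlesssim_sqcupC (x y d : S) : d ≲ x ⊔ y -> d ≲ y ⊔ x.
Proof. intros Hd. rewrite <- vsqcup_absorb. apply vlesssim_sqcupl, Hd. Qed.

Lemma vlesssim_sqcup_iff (i d y : S) : i ⊔ d ≲ y <-> i ≲ y /\ d ≲ y.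
Proof.
  unfold vlesssim. split.
  - intros Hy.
    assert (Hiy : y ⊔ i = y).
    { transitivity (y ⊔ (i ⊔ d) ⊔ i); [rewrite Hy; reflexivity |].
      rewrite <- vsqcupA, <- vsqcup_left_regular. exact Hy. }
    split; [exact Hiy |].
    transitivity (y ⊔ i ⊔ d); [rewrite Hiy; reflexivity |].
    rewrite <- vsqcupA. exact Hy.
  - intros [Hiy Hdy]. rewrite vsqcupA, Hiy. exact Hdy.
Qed.

Lemma vlesssim_sqcup_translate (x i d : S) : d ≲ x ⊔ i <-> i ⊔ d ≲ i ⊔ x.
Proof.
  split.
  - intros Hd. apply vlesssim_sqcup_iff.
    split; [apply vlesssim_sqcup_self | apply vlesssim_sqcupC, Hd].
  - intros Hid. apply vlesssim_sqcupC, (vlesssim_sqcup_iff i), Hid.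
Qed.

End LeftRegularBand.

Theorem lemma4p4 (S : Type) (vee : S -> S -> S) (HS : is_vee_algebra vee)
  (a b c d i : S) :
  vlesssim vee d (vsqcup vee a i) ->
  vlesssim vee d (vsqcup vee b i) ->
  vlesssim vee d (vsqcup vee c i) ->
  vlesssim vee d (vsqcup vee (vee a b) i) ->
  vlesssim vee d (vsqcup vee (vee b c) i) ->
  vlesssim vee d (vsqcup vee (vee a c) i).
Proof.
  destruct HS as (vsqcupA & _ & vsqcup_left_regular & _ & _ & _ &
                  vsqcup_veeDr & vlesssim_vee_trans).
  pose proof (vlesssim_sqcup_translate vee vsqcupA vsqcup_left_regular)
    as translate.
  intros Ha Hb Hc Hab Hbc.
  apply translate in Ha, Hb, Hc, Hab, Hbc.
  rewrite vsqcup_veeDr in Hab, Hbc.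
  apply translate. rewrite vsqcup_veeDr.
  exact (vlesssim_vee_trans _ _ _ _ Ha Hb Hc Hab Hbc).
Qed.
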